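(* Fix an iteration index $k \ge 0$ and an agent index $i \in \{0,1,\dots,n\}$. Suppose the densities $p_j^{(k+1)}$ for $j<i$ and $p_j^{(k)}$ for all $j$ are given. Define $\bar{\gamma}_i^{(k)}$ and $\bar{c}_i^{(k)}$ by $$\bar{\gamma}_i^{(k)}(f) = \sum_{j=0}^{i-1} \int_{\mathcal{F}} \psi(f, g)\, p_j^{(k+1)}(g)\, dg + \sum_{j=i+1}^{n} \int_{\mathcal{F}} \psi(f, g)\, p_j^{(k)}(g)\, dg, \qquad f\in\mathcal{F},$$ $$\bar{c}_i^{(k)}(p) = \int_{\mathcal{F}} p(f)\, \bar{\gamma}_i^{(k)}(f)\, df \quad (p\in\mathcal{P}).$$ Let $$p_i^{(k+1)}(f) = \frac{p_i^{(k)}(f)\exp\big(-\bar{\gamma}_i^{(k)}(f)\big)}{\int_{\mathcal{F}} p_i^{(k)}(g)\exp\big(-\bar{\gamma}_i^{(k)}(g)\big)\, dg}.$$ If $p_i^{(k+1)} \neq p_i^{(k)}$, then there exists $\xi>0$ such that $$\bar{c}_i^{(k)}\big(p_i^{(k+1)}\big) \le \bar{c}_i^{(k)}\big(p_i^{(k)}\big) - \xi .$$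
   Context: Trajectory space: $\mathcal{F} \subseteq \mathbb{R}^{d\times T}$, where $d$ is the state dimension and $T$ is the number of time points. Distribution space: $\mathcal{P}$ is the set of probability density functions $p:\mathcal{F}\to[0,\infty)$ with $\int_{\mathcal{F}} p(f)\,df=1$. There are $n+1$ agents, indexed $0,1,\dots,n$ (index $0$ is the robot). For each iteration $k\ge 0$ and each agent $j$, $p_j^{(k)}\in\mathcal{P}$ is agent $j$'s preference density. The collision penalty function $\psi:\mathcal{F}\times\mathcal{F}\to[0,\infty)$ is symmetric, i.e. $\psi(f,g)=\psi(g,f)$. *)

From HB Require Import structures.
From mathcomp Require Import all_boot all_order all_algebra.
From mathcomp Require Import all_classical all_reals all_analysis.
Set Implicit Arguments. Unset Strict Implicit. Unset Printing Implicit Defensive.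
Import Order.TTheory GRing.Theory Num.Theory.
Local Open Scope ring_scope.
Local Open Scope classical_set_scope.

Section defs.
Context {R : realType} {d : measure_display} {T : measurableType d}.
Variable mu : {measure set T -> \bar R}.

Definition is_density (p : T -> R) : Prop :=
  [/\ (forall x, 0 <= p x), measurable_fun setT p &
      (\int[mu]_x (p x)%:E = 1)%E].

Variable n : nat.
(** P k j = p_j^(k), agents indexed by 'I_n.+1 = {0,...,n}. *)
Variable P : nat -> 'I_n.+1 -> T -> R.
Variable psi : T -> T -> R.

Definition gamma_bar (k : nat) (i : 'I_n.+1) (f : T) : R :=
  \sum_(j < n.+1 | (j < i)%N) Rintegral mu setT (fun g => psi f g * P k.+1 j g)
  + \sum_(j < n.+1 | (i < j)%N) Rintegral mu setT (fun g => psi f g * P k j g).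

Definition cost_bar (k : nat) (i : 'I_n.+1) (p : T -> R) : \bar R :=
  (\int[mu]_f (p f * gamma_bar k i f)%:E)%E.

Definition gibbs_update (k : nat) (i : 'I_n.+1) (f : T) : R :=
  P k i f * expR (- gamma_bar k i f) /
  Rintegral mu setT (fun g => P k i g * expR (- gamma_bar k i g)).
End defs.

(* The update is the Gibbs reweighting p' = p e^{-g} / Z of p = p_i^(k) by
   g = gamma_bar, with Z = E_p[e^{-g}], so that the new cost is
   E_p[g e^{-g}] / Z while the old one is a = E_p[g].  Since g - a and
   e^{-g} - e^{-a} always have opposite signs,
   E_p[(g - a)(e^{-g} - e^{-a})] = E_p[g e^{-g}] - a Z <= 0, and equality
   forces g = a p-almost everywhere, i.e. p' = p.  When a = +oo there is
   nothing to prove beyond finiteness of the new cost, which holds because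
   g e^{-g} <= 1. *)

From HB Require Import structures.
From mathcomp Require Import all_boot all_order all_algebra.
From mathcomp Require Import all_classical all_reals all_analysis.
From mathcomp Require Import measurable_realfun.
From mathcomp Require Import ring.
Import Order.TTheory GRing.Theory Num.Theory.
Local Open Scope ring_scope.
Local Open Scope classical_set_scope.

Lemma mul_sub_expRN_le0 {R : realType} (x a : R) :
  (x - a) * (expR (- x) - expR (- a)) <= 0.
Proof.
have [xa|ax] := leP x a.
- apply: mulr_le0_ge0; first by rewrite subr_le0.
  by rewrite subr_ge0 ler_expR lerN2.
- apply: mulr_ge0_le0; first by rewrite subr_ge0 ltW.
  by rewrite subr_le0 ler_expR lerN2 ltW.
Qed.

Lemma mul_sub_expRN_eq0 {R : realType} (x a : R) :
  (x - a) * (expR (- x) - expR (- a)) = 0 -> x = a.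
Proof.
move/eqP; rewrite mulf_eq0 !subr_eq0 => /orP[/eqP //|/eqP].
by move/expR_inj/oppr_inj.
Qed.

Lemma mul_expRN_le1 {R : realType} (x : R) : 0 <= x -> x * expR (- x) <= 1.
Proof.
move=> x_ge0; rewrite expRN ler_pdivrMr ?expR_gt0 // mul1r.
by rewrite (le_trans _ (expR_ge1Dx x)) // lerDr.
Qed.

Lemma lte_fin_gap {R : realType} (x : R) (y : \bar R) : (x%:E < y)%E ->
  exists xi : R, 0 < xi /\ (x%:E <= y - xi%:E)%E.
Proof.
case: y => [y| |] //; rewrite ?lte_fin => xy.
- exists (y - x); split; first by rewrite subr_gt0.
  by rewrite -EFinB lee_fin opprB addrC subrK.
- by exists 1; rewrite addye ?leey.
Qed.

Section real_integral.
Context {R : realType} {d : measure_display} {T : measurableType d}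
  {mu : {measure set T -> \bar R}}.
Implicit Types f g : T -> R.
Local Notation integrableR f := (mu.-integrable setT (EFin \o f)).

Lemma ge0_integrableR f : measurable_fun setT f -> (forall x, 0 <= f x) ->
  (\int[mu]_x (f x)%:E < +oo)%E -> integrableR f.
Proof.
move=> mf f_ge0 fi; apply/integrableP; split; first exact/measurable_EFinP.
by under eq_integral do rewrite gee0_abs ?lee_fin //.
Qed.

Lemma le_integrableR f g : measurable_fun setT f ->
  (forall x, `|f x| <= `|g x|) -> integrableR g -> integrableR f.
Proof.
move=> mf fg ig; apply: (le_integrable measurableT _ _ ig).
  exact/measurable_EFinP.
by move=> x _ /=; rewrite lee_fin.
Qed.

Lemma integrableRD f g : integrableR f -> integrableR g ->
  integrableR (fun x => f x + g x).
Proof.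
move=> intf intg.
apply: (eq_integrable measurableT _ _ _ (integrableD measurableT intf intg)).
by move=> x _ /=; rewrite EFinD.
Qed.

Lemma integrableRZl r f : integrableR f -> integrableR (fun x => r * f x).
Proof.
move=> intf.
apply: (eq_integrable measurableT _ _ _ (integrableZl measurableT r intf)).
by move=> x _ /=; rewrite EFinM.
Qed.

Lemma integrableRB f g : integrableR f -> integrableR g ->
  integrableR (fun x => f x - g x).
Proof.
move=> intf intg; apply: integrableRD => //.
under eq_fun do rewrite -mulN1r; exact: integrableRZl.
Qed.

Lemma integralRE f : integrableR f ->
  (\int[mu]_x (f x)%:E)%E = (\int[mu]_x f x)%:E.
Proof.
by move=> intf; rewrite fineK // (integrable_fin_num measurableT intf).
Qed.

Lemma ae_eq_Rintegral f g : measurable_fun setT f -> measurable_fun setT g ->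
  {ae mu, forall x, f x = g x} -> \int[mu]_x f x = \int[mu]_x g x.
Proof.
move=> mf mg fg; congr fine; apply: ae_eq_integral => //.
- exact/measurable_EFinP.
- exact/measurable_EFinP.
- by apply: filterS fg => x /= ->.
Qed.

Lemma Rintegral_gt0 f : integrableR f -> (forall x, 0 <= f x) ->
  ~ {ae mu, forall x, f x = 0} -> 0 < \int[mu]_x f x.
Proof.
move=> intf f_ge0 f_neq0; rewrite lt_neqAle Rintegral_ge0 // andbT.
apply/eqP => If0; apply: f_neq0.
have mf : measurable_fun setT (EFin \o f) by exact: measurable_int intf.
have : (\int[mu]_x `|(EFin \o f) x|)%E = 0%E.
  under eq_integral do rewrite gee0_abs ?lee_fin //.
  by rewrite integralRE // -If0.
move/(ae_eq_integral_abs mu measurableT mf); apply: filterS => x /=.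
by move=> /(_ I) [].
Qed.
End real_integral.

Lemma measurable_sum_cond {R : realType} {d : measure_display}
    {T : measurableType d} (D : set T) (I : finType) (C : pred I)
    (h : I -> T -> R) :
  (forall j, measurable_fun D (h j)) ->
  measurable_fun D (fun x => \sum_(j | C j) h j x).
Proof.
move=> mh.
apply: (@eq_measurable_fun _ _ _ _ D
  (fun x => \sum_j (if C j then h j x else 0))).
  by move=> x _; rewrite -big_mkcond.
apply: measurable_sum => j; case: (C j) => //; exact: measurable_cst.
Qed.

Section kernel_integral.
Context {R : realType} {d : measure_display} {T : measurableType d}
  (mu : {measure set T -> \bar R}).
Hypothesis mu_sigma_finite : sigma_finite setT mu.

(* The Fubini-Tonelli lemmas expect a [sigma_finite_measure] structure, which
   [mu] only gets through the hypothesis: equip an alias of [mu] with it. *)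
Let mu_sf : set T -> \bar R := mu.
HB.instance Definition _ := Measure.on mu_sf.
HB.instance Definition _ :=
  Measure_isSigmaFinite.Build _ _ _ mu_sf mu_sigma_finite.

Lemma measurable_Rintegral_kernel (k : T -> T -> R) :
  (forall x y, 0 <= k x y) ->
  measurable_fun setT (fun xy : T * T => k xy.1 xy.2) ->
  measurable_fun setT (fun x => \int[mu]_y k x y).
Proof.
move=> k_ge0 mk.
have mkE : measurable_fun setT (fun xy : T * T => (k xy.1 xy.2)%:E).
  exact/measurable_EFinP.
have kE_ge0 (xy : T * T) : (0 <= (k xy.1 xy.2)%:E)%E by rewrite lee_fin.
apply: (measurableT_comp (fine_measurable measurableT)).
exact: (@measurable_fun_fubini_tonelli_F _ _ T T R mu_sf _ mkE kE_ge0).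
Qed.
End kernel_integral.

Section gibbs.
Context {R : realType} {d : measure_display} {T : measurableType d}
  (mu : {measure set T -> \bar R}).
Local Notation integrableR f := (mu.-integrable setT (EFin \o f)).

Definition gibbs (p g : T -> R) (x : T) : R :=
  p x * expR (- g x) / \int[mu]_y (p y * expR (- g y)).

Variables (p g : T -> R).
Hypothesis p_density : is_density mu p.
Hypothesis g_ge0 : forall x, 0 <= g x.
Hypothesis mg : measurable_fun setT g.

Let p_ge0 x : 0 <= p x. Proof. by case: p_density. Qed.
Let mp : measurable_fun setT p. Proof. by case: p_density. Qed.
Let p1 : (\int[mu]_x (p x)%:E = 1)%E. Proof. by case: p_density. Qed.
Let mexpg : measurable_fun setT (fun x => expR (- g x)).
Proof. exact: measurableT_comp (measurable_funN mg). Qed.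

Lemma integrable_density : integrableR p.
Proof. by apply: ge0_integrableR => //; rewrite p1 ltry. Qed.

Lemma Rintegral_density : \int[mu]_x p x = 1.
Proof. by rewrite /Rintegral p1. Qed.

Lemma integrable_density_expRN : integrableR (fun x => p x * expR (- g x)).
Proof.
apply: le_integrableR integrable_density; first exact: measurable_funM.
move=> x; rewrite normrM (ger0_norm (expR_ge0 _)) ler_piMr //.
by rewrite expR_le1 oppr_le0.
Qed.

Lemma integrable_density_mul_expRN :
  integrableR (fun x => p x * g x * expR (- g x)).
Proof.
apply: le_integrableR integrable_density.
  by apply: measurable_funM => //; exact: measurable_funM.
move=> x; rewrite -mulrA normrM (ger0_norm (mulr_ge0 (g_ge0 x) (expR_ge0 _))).
by rewrite ler_piMr // mul_expRN_le1.
Qed.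

Local Notation Z := (\int[mu]_x (p x * expR (- g x))).

Lemma gibbs_normalizer_gt0 : 0 < Z.
Proof.
apply: Rintegral_gt0 integrable_density_expRN _ _ => [x|pe0].
  by rewrite mulr_ge0 ?expR_ge0.
have p0 : {ae mu, forall x, p x = 0}.
  apply: filterS pe0 => x /eqP; rewrite mulf_eq0 => /orP[/eqP //|].
  by rewrite gt_eqF ?expR_gt0.
have := ae_eq_Rintegral p (cst 0) mp (measurable_cst (0 : R)) p0.
by rewrite Rintegral_density Rintegral_cst // mul0r => /eqP; rewrite oner_eq0.
Qed.

Lemma gibbs_mulE x : gibbs p g x * g x = Z^-1 * (p x * g x * expR (- g x)).
Proof. by rewrite /gibbs; ring. Qed.

Lemma integrable_gibbs_mul : integrableR (fun x => gibbs p g x * g x).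
Proof.
under eq_fun do rewrite gibbs_mulE.
exact: integrableRZl integrable_density_mul_expRN.
Qed.

Section finite_expectation.
Hypothesis pg_integrable : integrableR (fun x => p x * g x).

Local Notation a := (\int[mu]_x (p x * g x)).
Local Notation E := (expR (- a)).

Let covarianceE :
  (fun x => p x * ((g x - a) * (expR (- g x) - E))) = fun x =>
  (p x * g x * expR (- g x) - a * (p x * expR (- g x))) -
  (E * (p x * g x) - (a * E) * p x).
Proof. by apply/funext => x; ring. Qed.

Let integrable_covariance :
  integrableR (fun x => p x * ((g x - a) * (expR (- g x) - E))).
Proof.
rewrite covarianceE; apply: integrableRB; apply: integrableRB;
  do ?apply: integrableRZl.
- exact: integrable_density_mul_expRN.
- exact: integrable_density_expRN.
- exact: pg_integrable.
- exact: integrable_density.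
Qed.

Lemma Rintegral_density_covariance :
  \int[mu]_x (p x * ((g x - a) * (expR (- g x) - E))) =
  \int[mu]_x (p x * g x * expR (- g x)) - a * Z.
Proof.
have ipe := integrable_density_expRN.
have ipge := integrable_density_mul_expRN.
have ip := integrable_density.
have iape := integrableRZl a _ ipe.
have iEpg := integrableRZl E _ pg_integrable.
have iaEp := integrableRZl (a * E) _ ip.
rewrite covarianceE RintegralB //; try exact: integrableRB.
by rewrite !RintegralB // !RintegralZl // Rintegral_density; ring.
Qed.

Lemma Rintegral_density_mul_expRN_lt : ~ {ae mu, forall x, gibbs p g x = p x} ->
  \int[mu]_x (p x * g x * expR (- g x)) < a * Z.
Proof.
move=> moved; rewrite -subr_lt0 -Rintegral_density_covariance.
rewrite -oppr_gt0 -mulN1r -RintegralZl //.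
apply: Rintegral_gt0 (integrableRZl (-1) _ integrable_covariance) _ _
  => [x|cov0].
  by rewrite mulN1r oppr_ge0 mulr_ge0_le0 // mul_sub_expRN_le0.
have peE : {ae mu, forall x, p x * expR (- g x) = E * p x}.
  apply: filterS cov0 => x /eqP; rewrite mulN1r oppr_eq0 mulf_eq0.
  case/orP => [/eqP -> | /eqP /mul_sub_expRN_eq0 ->].
  - by rewrite !mulr0 mul0r.
  - by rewrite mulrC.
have ZE : Z = E.
  rewrite (ae_eq_Rintegral _ (fun x => E * p x) _ _ peE).
  - rewrite RintegralZl ?Rintegral_density ?mulr1 //.
    exact: integrable_density.
  - exact: measurable_funM.
  - exact: measurable_funM.
apply: moved; apply: filterS peE => x pxE.
by rewrite /gibbs pxE ZE [E * _]mulrC mulfK // gt_eqF ?expR_gt0.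
Qed.
End finite_expectation.

Lemma gibbs_expectation_lt : ~ {ae mu, forall x, gibbs p g x = p x} ->
  (\int[mu]_x (gibbs p g x * g x)%:E < \int[mu]_x (p x * g x)%:E)%E.
Proof.
move=> moved; rewrite integralRE; last exact: integrable_gibbs_mul.
have [->|pg_fin] := eqVneq (\int[mu]_x (p x * g x)%:E)%E +oo%E.
  exact: ltry.
have pg_integrable : integrableR (fun x => p x * g x).
  apply: ge0_integrableR; first exact: measurable_funM.
    by move=> x; rewrite mulr_ge0.
  by rewrite ltey.
rewrite integralRE // lte_fin.
under eq_Rintegral do rewrite gibbs_mulE.
rewrite RintegralZl //; last exact: integrable_density_mul_expRN.
rewrite mulrC ltr_pdivrMr ?gibbs_normalizer_gt0 //.
exact: Rintegral_density_mul_expRN_lt.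
Qed.
End gibbs.

Section gamma_bar.
Context {R : realType} {d : measure_display} {T : measurableType d}
  {mu : {measure set T -> \bar R}} {n : nat}
  {P : nat -> 'I_n.+1 -> T -> R} {psi : T -> T -> R}.
Hypothesis psi_ge0 : forall f g, 0 <= psi f g.
Hypothesis P_density : forall k j, is_density mu (P k j).

Lemma gamma_bar_ge0 k i f : 0 <= gamma_bar mu P psi k i f.
Proof.
have P_ge0 k' j g : 0 <= P k' j g by case: (P_density k' j) => + _ _; apply.
by apply: addr_ge0; apply: sumr_ge0 => j _; apply: Rintegral_ge0 => g _;
  rewrite mulr_ge0.
Qed.

Hypothesis mu_sigma_finite : sigma_finite setT mu.
Hypothesis mpsi : measurable_fun setT (fun fg : T * T => psi fg.1 fg.2).

Lemma measurable_gamma_bar k i : measurable_fun setT (gamma_bar mu P psi k i).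
Proof.
have mterm k' j :
    measurable_fun setT (fun f => \int[mu]_g (psi f g * P k' j g)).
  have [P_ge0 mP _] := P_density k' j.
  apply: measurable_Rintegral_kernel => //.
  - by move=> f g; rewrite mulr_ge0.
  - by apply: measurable_funM => //; exact: measurableT_comp.
by apply: measurable_funD; apply: measurable_sum_cond.
Qed.
End gamma_bar.

Theorem lemma1 (R : realType) (d : measure_display) (T : measurableType d)
  (mu : {measure set T -> \bar R}) (n : nat)
  (P : nat -> 'I_n.+1 -> T -> R) (psi : T -> T -> R) (k : nat) (i : 'I_n.+1) :
  sigma_finite setT mu ->
  (forall f g, 0 <= psi f g) ->
  (forall f g, psi f g = psi g f) ->
  measurable_fun setT (fun fg : T * T => psi fg.1 fg.2) ->
  (forall kk j, is_density mu (P kk j)) ->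
  (forall f (j : 'I_n.+1), (j < i)%N ->
     mu.-integrable setT (fun g => (psi f g * P k.+1 j g)%:E)) ->
  (forall f (j : 'I_n.+1), (i < j)%N ->
     mu.-integrable setT (fun g => (psi f g * P k j g)%:E)) ->
  (forall f, P k.+1 i f = gibbs_update mu P psi k i f) ->
  ~ {ae mu, forall f, P k.+1 i f = P k i f} ->
  exists xi : R, 0 < xi /\
    (cost_bar mu P psi k i (P k.+1 i) <= cost_bar mu P psi k i (P k i) - xi%:E)%E.
Proof.
move=> mu_sf psi_ge0 _ mpsi P_density _ _ P_update P_moved.
set g := gamma_bar mu P psi k i.
have g_ge0 : forall f, 0 <= g f := gamma_bar_ge0 psi_ge0 P_density k i.
have mg : measurable_fun setT g :=
  measurable_gamma_bar psi_ge0 P_density mu_sf mpsi k i.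
have P_gibbs : P k.+1 i = gibbs mu (P k i) g by exact/funext.
rewrite /cost_bar P_gibbs; rewrite {}P_gibbs in P_moved.
have := gibbs_expectation_lt mu (P k i) g (P_density k i) g_ge0 mg P_moved.
rewrite integralRE; last exact: integrable_gibbs_mul.
exact: lte_fin_gap.
Qed.
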